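(* Let $K$ be a quadratic number field with ring of integers $\mathcal{O}_K$. There exists $X\in\mathcal{O}_K$ such that every element of $\mathcal{O}_K$ can be written uniquely as a finite sum $\sum_j\alpha_jX^j$ with $\alpha_j\in\{0,1\}$ (i.e. $X$ is an $\mathbb{S}$-generator of $\mathcal{O}_K$) if and only if $K$ is one of the following, and in each case the indicated element is such a generator: $\mathbb{Q}(\sqrt{-1})$ with $X=-1+\sqrt{-1}$ of $\mathcal{O}_K=\mathbb{Z}[\sqrt{-1}]$; $\mathbb{Q}(\sqrt{-2})$ with $X=\sqrt{-2}$ of $\mathcal{O}_K=\mathbb{Z}[\sqrt{-2}]$; $\mathbb{Q}(\sqrt{-7})$ with $X=\frac12(1+\sqrt{-7})$.
   Context: An $\mathbb{S}$-generator (i.e. $\mathbb{S}[\mu_{1,+}]$-generator, $\mu_1=\{1\}$) of a ring $A$ is an element $X\in A$ such that every element of $A$ is uniquely a finite sum of distinct powers $X^j$, $j\ge0$ (coefficients in $\{0,1\}$). *)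

From HB Require Import structures.
From mathcomp Require Import all_boot all_order all_algebra.
From mathcomp Require Import finmap.
Set Implicit Arguments. Unset Strict Implicit. Unset Printing Implicit Defensive.
Import Order.TTheory GRing.Theory Num.Theory.
Local Open Scope ring_scope.

(* Quadratic number fields K = Q(sqrt d), d a squarefree integer, d <> 0, 1.
   Every quadratic field arises from exactly one such d. *)
Definition squarefree_int (d : int) : Prop :=
  forall p : nat, prime p -> ~~ ((p * p)%N%:Z %| d)%Z.

Definition quad_disc_param (d : int) : Prop :=
  [/\ d != 0, d != 1 & squarefree_int d].

(* The ring of integers O_K = Z[w], with
     w = sqrt d          if d = 2, 3 mod 4,   so  w^2 = d,
     w = (1 + sqrt d)/2  if d = 1 mod 4,      so  w^2 = w + (d-1)/4.
   An element a + b w is represented by the pair (a, b). *)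
Definition qtrace (d : int) : int := if (d %% 4)%Z == 1 then 1 else 0.
Definition qnorm (d : int) : int :=
  if (d %% 4)%Z == 1 then ((d - 1) %/ 4)%Z else d.

Definition OK := (int * int)%type.

Definition OK_zero : OK := (0, 0).
Definition OK_one : OK := (1, 0).
Definition OK_add (x y : OK) : OK := (x.1 + y.1, x.2 + y.2).
(* (a + b w)(c + e w) = ac + b e n + (a e + b c + b e t) w, where w^2 = t w + n *)
Definition OK_mul (d : int) (x y : OK) : OK :=
  (x.1 * y.1 + x.2 * y.2 * qnorm d,
   x.1 * y.2 + x.2 * y.1 + x.2 * y.2 * qtrace d).
Fixpoint OK_pow (d : int) (x : OK) (n : nat) : OK :=
  if n is m.+1 then OK_mul d x (OK_pow d x m) else OK_one.

Definition OK_powsum (d : int) (X : OK) (S : {fset nat}) : OK :=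
  \big[OK_add/OK_zero]_(j <- S) OK_pow d X j.

Definition S_generator (d : int) (X : OK) : Prop :=
  forall a : OK, exists! S : {fset nat}, OK_powsum d X S = a.

(* Write a = b + X c with a digit b in {0, 1}.  If X is an S-generator, this
   decomposition exists for every a and is unique, so X is not a unit (1 would
   have two expansions) and X is not in 2 O_K (w would have none); decomposing
   2 = X c then forces N(X) = +-2.  For d > 0 both real conjugates of X are
   <= -2/3: a nonnegative conjugate never reaches -1, and one in (-2/3, 0)
   keeps every sum of powers in (-3, 3).  Their product is then 2 and their sum
   t lies in [-3, -1], contradicting t^2 - 8 = D y^2 with D >= 2 the
   discriminant.  For d < 0 the equation t^2 - D y^2 = 8 leaves D = -4, -8 or
   -7, i.e. d = -1, -2, -7.  Conversely, for the listed X of norm 2 the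
   quotient c has smaller norm than b + X c as soon as the latter exceeds 5,
   and the elements of norm at most 5 have expansions with at most 8 digits. *)

From HB Require Import structures.
From mathcomp Require Import all_boot all_order all_algebra.
From mathcomp Require Import finmap realalg.
From mathcomp Require Import zify ring lra.
Set Implicit Arguments. Unset Strict Implicit. Unset Printing Implicit Defensive.
Import Order.TTheory GRing.Theory Num.Theory.
Local Open Scope ring_scope.

Definition fset_shift (b : bool) (T : {fset nat}) : {fset nat} :=
  ((if b then [fset 0%N] else fset0) `|` [fset j.+1 | j in T])%fset.
Definition fset_unshift (S : {fset nat}) : {fset nat} :=
  [fset j.-1 | j in S & (0 < j)%N]%fset.

Lemma mem_fset_shift0 b T : (0%N \in fset_shift b T) = b.
Proof. by rewrite in_fsetU; case: b; rewrite ?inE //=; apply/imfsetP => -[]. Qed.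

Lemma mem_fset_shiftS b T k : (k.+1 \in fset_shift b T) = (k \in T).
Proof. by rewrite in_fsetU mem_imfset; [case: b; rewrite ?inE | move=> i j []]. Qed.

Lemma mem_fset_unshift S k : (k \in fset_unshift S) = (k.+1 \in S).
Proof.
apply/imfsetP/idP => [[j /andP[jS j0] ->]|kS]; first by rewrite prednK.
by exists k.+1; rewrite ?inE /= ?kS.
Qed.

Lemma fset_shift_unshift S : fset_shift (0%N \in S) (fset_unshift S) = S.
Proof. by apply/fsetP => -[|k]; rewrite ?mem_fset_shift0 // mem_fset_shiftS mem_fset_unshift. Qed.

Lemma fset_shift_inj b b' T T' : fset_shift b T = fset_shift b' T' -> b = b' /\ T = T'.
Proof.
move=> e; split; first by rewrite -(mem_fset_shift0 b T) e mem_fset_shift0.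
by apply/fsetP => k; rewrite -(mem_fset_shiftS b) e mem_fset_shiftS.
Qed.

Lemma fset_shift_false0 : fset_shift false fset0 = fset0.
Proof. by apply/fsetP => -[|k]; rewrite ?mem_fset_shift0 ?mem_fset_shiftS inE. Qed.

Lemma fset_shift_ind (P : {fset nat} -> Prop) :
  P fset0 -> (forall b T, P T -> P (fset_shift b T)) -> forall S, P S.
Proof.
move=> P0 Pcons; suff PS n S : (forall j, j \in S -> (j < n)%N) -> P S.
  by move=> S; apply: (PS (\max_(j <- S) j).+1) => j jS; rewrite ltnS leq_bigmax_seq.
elim: n S => [|n IHn] S Sn.
  by have -> : S = fset0 by apply/fsetP => j; rewrite inE; apply/negbTE/negP => /Sn.
rewrite -(fset_shift_unshift S); apply/Pcons/IHn => j; rewrite mem_fset_unshift; exact: Sn.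
Qed.

Lemma OK_addA : associative OK_add.
Proof. by move=> x y z; rewrite /OK_add /= !addrA. Qed.
Lemma OK_addC : commutative OK_add.
Proof. by move=> x y; rewrite /OK_add addrC [x.2 + _]addrC. Qed.
Lemma OK_add0r : left_id OK_zero OK_add.
Proof. by move=> [a b]; rewrite /OK_add /= !add0r. Qed.
HB.instance Definition _ :=
  Monoid.isComLaw.Build OK OK_zero OK_add OK_addA OK_addC OK_add0r.

Section OKMul.
Variable d : int.

Lemma OK_mulDr x y z : OK_mul d x (OK_add y z) = OK_add (OK_mul d x y) (OK_mul d x z).
Proof. rewrite /OK_mul /OK_add /=; congr pair; ring. Qed.
Lemma OK_mulr0 x : OK_mul d x OK_zero = OK_zero.
Proof. rewrite /OK_mul /OK_zero /=; congr pair; ring. Qed.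
Lemma OK_mulA x y z : OK_mul d x (OK_mul d y z) = OK_mul d (OK_mul d x y) z.
Proof. rewrite /OK_mul /=; congr pair; ring. Qed.
Lemma OK_mulr1 x : OK_mul d x OK_one = x.
Proof. by case: x => a b; rewrite /OK_mul /OK_one /=; congr pair; ring. Qed.

End OKMul.

Definition OK_bit (b : bool) : OK := if b then OK_one else OK_zero.

Section Digits.
Variables (d : int) (X : OK).
Local Notation ps := (OK_powsum d X).

Definition digit_cons (b : bool) (c : OK) : OK := OK_add (OK_bit b) (OK_mul d X c).
Definition digits_val (bs : seq bool) : OK := foldr digit_cons OK_zero bs.
Definition fset_of_digits (bs : seq bool) : {fset nat} := foldr fset_shift fset0 bs.

Lemma OK_powsum0 : ps fset0 = OK_zero.
Proof. by rewrite /OK_powsum big_seq_fset0. Qed.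

Lemma OK_powsum_shift b T : ps (fset_shift b T) = digit_cons b (ps T).
Proof.
have shift : ps [fset j.+1 | j in T]%fset = OK_mul d X (ps T).
  rewrite /OK_powsum big_imfset /=; last by move=> i j _ _ [].
  by rewrite (big_endo (OK_mul d X)) ?OK_mulr0 //; exact: OK_mulDr.
rewrite /fset_shift /digit_cons; case: b => /=; last by rewrite fset0U shift OK_add0r.
by rewrite {1}/OK_powsum big_fsetU1 /= -?shift //; apply/imfsetP => -[].
Qed.

Lemma OK_powsum_ind (P : OK -> Prop) :
  P OK_zero -> (forall b y, P y -> P (digit_cons b y)) -> forall S, P (ps S).
Proof.
move=> P0 Pcons; elim/fset_shift_ind => [|b S PS]; first by rewrite OK_powsum0.
by rewrite OK_powsum_shift; apply: Pcons.
Qed.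

Lemma OK_powsum_digits bs : ps (fset_of_digits bs) = digits_val bs.
Proof. by elim: bs => [|b bs IH] /=; rewrite ?OK_powsum0 // OK_powsum_shift IH. Qed.

Hypothesis digit_cons_inj :
  forall b b' c c', digit_cons b c = digit_cons b' c' -> b = b' /\ c = c'.

Lemma OK_powsum_inj : injective ps.
Proof.
elim/fset_shift_ind => [|b S IH] T; last first.
  by rewrite -(fset_shift_unshift T) !OK_powsum_shift => /digit_cons_inj [<- /IH <-].
elim/fset_shift_ind: T => [//|b T IHT]; rewrite OK_powsum0 OK_powsum_shift => e.
have [<- T0] : false = b /\ OK_zero = ps T.
  by apply: digit_cons_inj; rewrite -e /digit_cons OK_mulr0 OK_add0r.
by rewrite -IHT ?fset_shift_false0 // OK_powsum0.
Qed.

Lemma S_generator_of_digits :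
  (forall a, exists bs, digits_val bs = a) -> S_generator d X.
Proof.
move=> surj a; have [bs <-] := surj a; exists (fset_of_digits bs).
split=> [|S e]; first exact: OK_powsum_digits.
by apply: OK_powsum_inj; rewrite e OK_powsum_digits.
Qed.

End Digits.

Section SGenerator.
Variables (d : int) (X : OK).
Hypothesis SG : S_generator d X.
Local Notation ps := (OK_powsum d X).

Lemma S_generator_digit a : exists b c, a = digit_cons d X b c.
Proof.
have [S [<- _]] := SG a; exists (0%N \in S), (ps (fset_unshift S)).
by rewrite -OK_powsum_shift fset_shift_unshift.
Qed.

Lemma S_generator_nonunit Y : OK_mul d X Y <> OK_one.
Proof.
move=> XY1; have [T [PT _]] := SG Y; rewrite -PT in XY1.
have [S1 [_ uniq1]] := SG OK_one.
have one_true : ps (fset_shift true fset0) = OK_one.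
  by rewrite OK_powsum_shift OK_powsum0 /digit_cons OK_mulr0 OK_addC OK_add0r.
have one_false : ps (fset_shift false T) = OK_one.
  by rewrite OK_powsum_shift /digit_cons XY1 OK_add0r.
by case/fset_shift_inj: (etrans (esym (uniq1 _ one_true)) (uniq1 _ one_false)).
Qed.

End SGenerator.

Section Norm.
Variable d : int.

Definition OK_tr (x : OK) : int := 2 * x.1 + qtrace d * x.2.
Definition OK_norm (x : OK) : int :=
  x.1 * x.1 + qtrace d * x.1 * x.2 - qnorm d * x.2 * x.2.
Definition OK_conj (x : OK) : OK := (x.1 + qtrace d * x.2, - x.2).
Definition qdisc : int := qtrace d ^+ 2 + 4 * qnorm d.

Lemma OK_normM x y : OK_norm (OK_mul d x y) = OK_norm x * OK_norm y.
Proof. rewrite /OK_norm /OK_mul /=; ring. Qed.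

Lemma OK_tr_norm x : OK_tr x ^+ 2 - 4 * OK_norm x = qdisc * x.2 ^+ 2.
Proof. rewrite /OK_tr /OK_norm /qdisc; ring. Qed.

Lemma qdiscE : qdisc = if (d %% 4)%Z == 1 then d else 4 * d.
Proof. by rewrite /qdisc /qtrace /qnorm; case: ifP => /eqP; lia. Qed.

Lemma OK_unit_of_norm x : OK_norm x ^+ 2 = 1 -> exists y, OK_mul d x y = OK_one.
Proof.
move=> Nx1; exists (OK_mul d (OK_norm x, 0) (OK_conj x)).
by rewrite /OK_mul /OK_conj /OK_one /=; congr pair; rewrite -?Nx1 /OK_norm; ring.
Qed.

End Norm.

Lemma int_divisor4 (a b : int) : a * b = 4 -> a ^+ 2 != 1 -> b ^+ 2 != 1 ->
  a = 2 \/ a = -2.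
Proof. move=> ab4 a1 b1; nia. Qed.

Section SGeneratorNorm.
Variables (d : int) (X : OK).
Hypothesis SG : S_generator d X.

Lemma S_generator_not_even z : X <> OK_mul d (2, 0) z.
Proof.
move=> X2z; have [b [c /(congr1 snd)]] := S_generator_digit SG (0, 1).
rewrite /digit_cons X2z -OK_mulA /OK_add /OK_bit /OK_mul /=.
by case: b => /=; lia.
Qed.

Lemma S_generator_norm : OK_norm d X = 2 \/ OK_norm d X = -2.
Proof.
have [b [c two]] := S_generator_digit SG (2, 0).
have Xc2 : OK_mul d X c = (2, 0).
  move: two; rewrite /digit_cons; case: (OK_mul d X c) (S_generator_nonunit (Y := c) SG) => u v.
  by rewrite /OK_add /OK_one; case: b => /= Xc1 [u2 v0]; [case: Xc1|]; congr pair; lia.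
apply: (@int_divisor4 _ (OK_norm d c)).
- by rewrite -OK_normM Xc2 /OK_norm /=; ring.
- by apply/eqP => /OK_unit_of_norm [y]; apply: (S_generator_nonunit SG).
apply/eqP => /OK_unit_of_norm [y cy1]; apply: (S_generator_not_even (z := y)).
by rewrite -[X](OK_mulr1 d) -cy1 OK_mulA Xc2.
Qed.

End SGeneratorNorm.

Lemma sqr_between (u n : int) : 0 <= n -> n ^+ 2 < u ^+ 2 < (n + 1) ^+ 2 -> False.
Proof.
move=> n0 /andP[lo hi].
have [u0|u0] := lerP 0 u.
- by have [un|un] := lerP u n; nia.
- by have [un|un] := lerP (- u) n; nia.
Qed.

Lemma sqr_neq8 (u : int) : u ^+ 2 != 8.
Proof. by apply/eqP => u8; apply: (@sqr_between u 2) => //; rewrite u8. Qed.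

Lemma int_sqr_form8 (u v D : int) : u ^+ 2 - D * v ^+ 2 = 8 -> D <= 0 ->
  -8 <= D < 0 /\ D != -3.
Proof.
move=> uv8 Dle0; have v0 : v != 0.
  by apply: contra_eqN uv8 => /eqP->; rewrite expr0n mulr0 subr0 sqr_neq8.
have Dneg : D < 0.
  by rewrite lt_neqAle Dle0 andbT; apply: contra_eqN uv8 => /eqP->; rewrite mul0r subr0 sqr_neq8.
rewrite Dneg; move: uv8; rewrite !expr2 => uv8.
have v1 : 1 <= v * v by nia.
split; first nia.
apply/eqP => D3; rewrite D3 in uv8.
have [v2|v2] : v * v = 1 \/ v * v = 2 by nia.
- by apply: (@sqr_between u 2) => //; rewrite !expr2; nia.
- by apply: (@sqr_between v 1) => //; rewrite !expr2; nia.
Qed.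

Lemma OK_norm2_imaginary d x : qdisc d <= 0 ->
  OK_norm d x = 2 \/ OK_norm d x = -2 -> [\/ d = -1, d = -2 | d = -7].
Proof.
move=> Dle0 N2; have uv := OK_tr_norm d x.
have [/andP[D8 D0] D3] : -8 <= qdisc d < 0 /\ qdisc d != -3.
  by apply: (@int_sqr_form8 (OK_tr d x) x.2) => //; case: N2 => N2; rewrite N2 in uv; nia.
move: D8 D0 D3; rewrite qdiscE; case: ifP => /eqP dmod D8 D0 D3.
- by constructor 3; lia.
- have [->|->] : d = -1 \/ d = -2 by lia.
  + by constructor 1.
  + by constructor 2.
Qed.

Definition OK_emb (R : pzRingType) (w : R) (x : OK) : R := x.1%:~R + x.2%:~R * w.

Section Embedding.
Variables (R : realFieldType) (d : int) (w : R).
Local Notation t := (qtrace d)%:~R.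
Local Notation n := (qnorm d)%:~R.
Hypothesis w_root : w ^+ 2 = t * w + n.

Lemma OK_emb_add x y : OK_emb w (OK_add x y) = OK_emb w x + OK_emb w y.
Proof. by rewrite /OK_emb /OK_add /= !rmorphD /=; ring. Qed.

Lemma OK_emb_mul x y : OK_emb w (OK_mul d x y) = OK_emb w x * OK_emb w y.
Proof.
have n_eq : n = w ^+ 2 - t * w by rewrite w_root; ring.
by rewrite /OK_emb /OK_mul /= !(rmorphD, rmorphM) /= n_eq; ring.
Qed.

Lemma OK_emb_digit X b c :
  OK_emb w (digit_cons d X b c) = b%:R + OK_emb w X * OK_emb w c.
Proof. by rewrite OK_emb_add OK_emb_mul; case: b; rewrite /OK_emb /=; ring. Qed.

Lemma conj_root : (t - w) ^+ 2 = t * (t - w) + n.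
Proof. by rewrite -[n]addr0 -(subrr (w ^+ 2)) {2}w_root; ring. Qed.

Lemma OK_emb_conjD x : OK_emb w x + OK_emb (t - w) x = (OK_tr d x)%:~R.
Proof. by rewrite /OK_emb /OK_tr !(rmorphD, rmorphM) /=; ring. Qed.

Lemma OK_emb_conjM x : OK_emb w x * OK_emb (t - w) x = (OK_norm d x)%:~R.
Proof.
have n_eq : n = w ^+ 2 - t * w by rewrite w_root; ring.
by rewrite /OK_emb /OK_norm !(rmorphB, rmorphD, rmorphM) /= n_eq; ring.
Qed.

Section EmbeddedGenerator.
Variable X : OK.
Hypothesis SG : S_generator d X.

Lemma S_generator_emb_le : OK_emb w X <= - (2 / 3).
Proof.
rewrite leNgt; apply/negP => r_gt.
have [r_ge0 | r_lt0] := lerP 0 (OK_emb w X).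
- have [S [PS _]] := SG (-1, 0).
  have : 0 <= OK_emb w (OK_powsum d X S).
    apply: (OK_powsum_ind (P := fun a => 0 <= OK_emb w a)) => [|b y y_ge0].
      by rewrite /OK_emb /= mul0r addr0.
    by rewrite OK_emb_digit addr_ge0 ?mulr_ge0.
  by rewrite PS /OK_emb /= mul0r addr0 rmorphN /= oppr_ge0 ler10.
- have [S [PS _]] := SG (3, 0).
  have : `|OK_emb w (OK_powsum d X S)| < 3.
    apply: (OK_powsum_ind (P := fun a => `|OK_emb w a| < 3)) => [|b y y_lt3].
      by rewrite /OK_emb /= mul0r addr0 normr0.
    move: y_lt3; rewrite OK_emb_digit !ltr_norml => /andP[lo hi].
    by case: b => /=; apply/andP; split; nra.
  by rewrite PS /OK_emb /= mul0r addr0 ltr_norml; lra.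
Qed.
End EmbeddedGenerator.
End Embedding.

Lemma qdisc_root (R : rcfType) d : 0 <= qdisc d ->
  exists w : R, w ^+ 2 = (qtrace d)%:~R * w + (qnorm d)%:~R.
Proof.
move=> D_ge0; pose s : R := Num.sqrt (qdisc d)%:~R.
have s2 : s ^+ 2 = (qtrace d)%:~R ^+ 2 + 4 * (qnorm d)%:~R.
  by rewrite sqr_sqrtr ?ler0z // /qdisc rmorphD rmorphM rmorphXn.
exists (((qtrace d)%:~R + s) / 2).
rewrite [LHS](_ : _ = (qtrace d)%:~R * (((qtrace d)%:~R + s) / 2)
                   + (s ^+ 2 - (qtrace d)%:~R ^+ 2) / 4); last by field.
by rewrite s2; field.
Qed.

Lemma neg_conj_pair (R : realFieldType) (r r' : R) (N T : int) :
  r <= - (2 / 3) -> r' <= - (2 / 3) -> r * r' = N%:~R -> r + r' = T%:~R ->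
  N = 2 \/ N = -2 -> N = 2 /\ -4 < T < 0.
Proof.
move=> r_le r'_le rr'N rr'T [] N2; rewrite N2 ?rmorphN rmorph_nat /= in rr'N; last by exfalso; nra.
have : 0 <= (r + 2 / 3) * (r' + 2 / 3).
  by rewrite -mulrNN mulr_ge0 // oppr_ge0 -lerBrDr sub0r.
rewrite -(ltr_int R) -[(-4 < T)%R](ltr_int R) -rr'T rmorphN rmorph_nat /=.
by split=> //; apply/andP; split; nra.
Qed.

Lemma S_generator_real d X : 1 < qdisc d -> ~ S_generator d X.
Proof.
move=> D_gt1 SG; have [w w_root] := @qdisc_root realalg d (ltW (lt_trans ltr01 D_gt1)).
have [N2 /andP[T_gtm4 T_lt0]] := neg_conj_pair (S_generator_emb_le w_root SG)
  (S_generator_emb_le (conj_root w_root) SG) (OK_emb_conjM w_root X)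
  (OK_emb_conjD d w X) (S_generator_norm SG).
have := OK_tr_norm d X; rewrite N2.
have [->|v0] := eqVneq X.2 0.
  by rewrite expr0n mulr0 => /eqP; rewrite subr_eq0 (negbTE (sqr_neq8 _)).
have v1 : 1 <= X.2 * X.2 by nia.
rewrite !expr2; nia.
Qed.

Lemma OK_norm_add1 d y : OK_norm d (OK_add OK_one y) = 1 + OK_tr d y + OK_norm d y.
Proof. rewrite /OK_norm /OK_tr /OK_add /=; ring. Qed.

Section ImaginaryGenerator.
Variables (d : int) (X : OK).
Hypotheses (D_lt0 : qdisc d < 0) (NX : OK_norm d X = 2).

Lemma OK_tr_sqr_le x : OK_tr d x ^+ 2 <= 4 * OK_norm d x.
Proof.
rewrite -subr_ge0 -[_ - _]opprB OK_tr_norm oppr_ge0.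
by rewrite mulr_le0_ge0 ?sqr_ge0 // ltW.
Qed.

Lemma OK_norm_ge0 x : 0 <= OK_norm d x.
Proof. by have := OK_tr_sqr_le x; have := sqr_ge0 (OK_tr d x); lia. Qed.

Lemma OK_norm_eq0 x : OK_norm d x = 0 -> x = OK_zero.
Proof.
move=> N0; have := OK_tr_norm d x; rewrite N0 mulr0 subr0 /OK_tr !expr2 => uv.
have v0 : x.2 = 0.
  have /eqP : qdisc d * (x.2 * x.2) = 0.
    apply/eqP; rewrite eq_le; apply/andP; split.
    - by apply: mulr_le0_ge0; [exact: ltW | rewrite -expr2 sqr_ge0].
    - by rewrite -uv -expr2 sqr_ge0.
  by rewrite !mulf_eq0 (negbTE (ltr0_neq0 D_lt0)) orbb => /eqP.
case: x {N0} v0 uv => a b /= -> uv; rewrite /OK_zero; congr pair; nia.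
Qed.

Lemma digit_cons_inj b b' c c' :
  digit_cons d X b c = digit_cons d X b' c' -> b = b' /\ c = c'.
Proof.
rewrite /digit_cons /OK_add => -[e1 e2].
pose y : OK := (c.1 - c'.1, c.2 - c'.2).
pose delta : int := (OK_bit b').1 - (OK_bit b).1.
have Xy : OK_mul d X y = (delta, 0).
  rewrite /OK_mul /y /delta /=; congr pair.
  - by move: e1; rewrite /OK_mul /=; case: (OK_bit b) (OK_bit b') => [? ?] [? ?] /=; lia.
  - by move: e2; rewrite /OK_mul /=; case: (b) (b') => -[] /=; lia.
have Ny : 2 * OK_norm d y = delta ^+ 2.
  by rewrite -NX -OK_normM Xy /OK_norm /=; ring.
have b_eq : b = b' by move: Ny; rewrite /delta; case: (b) (b') => -[] /=; lia.
split=> //; move: Ny; rewrite /delta b_eq subrr expr0n /= => /eqP.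
rewrite mulf_eq0 /= => /eqP /OK_norm_eq0 [].
by move=> c1 c2; rewrite [c]surjective_pairing [c']surjective_pairing; congr pair; lia.
Qed.

(* With y = X c: N(1 + y) = 1 + tr y + 2 N c, while tr(y)^2 <= 4 N y = 8 N c. *)
Lemma digit_cons_norm_lt b c : 5 < OK_norm d (digit_cons d X b c) ->
  OK_norm d c < OK_norm d (digit_cons d X b c).
Proof.
have Nc := OK_norm_ge0 c; have := OK_tr_sqr_le (OK_mul d X c).
rewrite /digit_cons OK_normM NX; case: b => /=; last by rewrite OK_add0r OK_normM NX; lia.
rewrite OK_norm_add1 OK_normM NX !expr2; nia.
Qed.

Hypothesis digit_cons_surj : forall a, exists b c, a = digit_cons d X b c.
Hypothesis digits_val_small : forall a, OK_norm d a <= 5 -> exists bs, digits_val d X bs = a.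

Lemma digits_val_surj a : exists bs, digits_val d X bs = a.
Proof.
have [n] := ubnP (absz (OK_norm d a)); elim: n a => // n IHn a /ltnSE Na_le.
have [/digits_val_small //|Na_gt5] := lerP (OK_norm d a) 5.
have [b [c a_eq]] := digit_cons_surj a; rewrite a_eq in Na_le Na_gt5.
have [bs c_eq] : exists bs, digits_val d X bs = c.
  apply: IHn; apply: leq_trans Na_le; have := digit_cons_norm_lt Na_gt5; have := OK_norm_ge0 c; lia.
by exists (b :: bs); rewrite a_eq /= c_eq.
Qed.

Lemma S_generator_of_norm2 : S_generator d X.
Proof. exact: S_generator_of_digits digit_cons_inj digits_val_surj. Qed.

End ImaginaryGenerator.

Fixpoint bitseqs (n : nat) : seq (seq bool) :=
  if n is n'.+1 then [seq b :: s | b <- [:: false; true], s <- bitseqs n'] else [:: [::]].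

Definition box2 : seq OK := [seq (i%:Z - 2, j%:Z - 2) | i <- iota 0 5, j <- iota 0 5].

Lemma mem_box2 (a : OK) : -2 <= a.1 <= 2 -> -2 <= a.2 <= 2 -> a \in box2.
Proof.
case: a => a1 a2 /= a1_bd a2_bd; apply/allpairsP.
exists (absz (a1 + 2), absz (a2 + 2)).
by split; rewrite ?mem_iota /=; [lia | lia | congr pair; lia].
Qed.

Lemma digits_val_box2 d X :
  all (fun a => has (fun bs => digits_val d X bs == a) (bitseqs 8)) box2 ->
  forall a : OK, -2 <= a.1 <= 2 -> -2 <= a.2 <= 2 -> exists bs, digits_val d X bs = a.
Proof.
move=> /allP box_ok a a1_bd a2_bd.
by have /hasP [bs _ /eqP] := box_ok a (mem_box2 a1_bd a2_bd); exists bs.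
Qed.

Lemma sqr_le5 (u : int) : u * u <= 5 -> -2 <= u <= 2.
Proof. by move=> u5; apply/andP; split; nia. Qed.

Lemma S_generator_m1 : S_generator (-1) (-1, 1).
Proof.
have [qt qn] : qtrace (-1) = 0 /\ qnorm (-1) = -1 by [].
apply: S_generator_of_norm2 => //.
- move=> [a1 a2]; have [k [a_even|a_odd]] : exists k, a1 + a2 = 2 * k \/ a1 + a2 = 2 * k + 1.
    by exists ((a1 + a2) %/ 2)%Z; lia.
  + exists false, (k - a1, - k).
    by rewrite /digit_cons /OK_mul /OK_add /OK_bit /= qt qn; congr pair; lia.
  + exists true, (k - a1 + 1, - k).
    by rewrite /digit_cons /OK_mul /OK_add /OK_bit /= qt qn; congr pair; lia.
- move=> a; rewrite /OK_norm qt qn => Na; apply: digits_val_box2; first by vm_compute.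
  + by apply: sqr_le5; have := sqr_ge0 a.2; rewrite expr2; lia.
  + by apply: sqr_le5; have := sqr_ge0 a.1; rewrite expr2; lia.
Qed.

Lemma S_generator_m2 : S_generator (-2) (0, 1).
Proof.
have [qt qn] : qtrace (-2) = 0 /\ qnorm (-2) = -2 by [].
apply: S_generator_of_norm2 => //.
- move=> [a1 a2]; have [k [a_even|a_odd]] : exists k, a1 = 2 * k \/ a1 = 2 * k + 1.
    by exists (a1 %/ 2)%Z; lia.
  + exists false, (a2, - k).
    by rewrite /digit_cons /OK_mul /OK_add /OK_bit /= qt qn; congr pair; lia.
  + exists true, (a2, - k).
    by rewrite /digit_cons /OK_mul /OK_add /OK_bit /= qt qn; congr pair; lia.
- move=> a; rewrite /OK_norm qt qn => Na; apply: digits_val_box2; first by vm_compute.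
  + by apply: sqr_le5; have := sqr_ge0 a.2; rewrite expr2; lia.
  + by apply: sqr_le5; have := sqr_ge0 a.1; rewrite expr2; lia.
Qed.

Lemma S_generator_m7 : S_generator (-7) (0, 1).
Proof.
have [qt qn] : qtrace (-7) = 1 /\ qnorm (-7) = -2 by [].
apply: S_generator_of_norm2 => //.
- move=> [a1 a2]; have [k [a_even|a_odd]] : exists k, a1 = 2 * k \/ a1 = 2 * k + 1.
    by exists (a1 %/ 2)%Z; lia.
  + exists false, (a2 + k, - k).
    by rewrite /digit_cons /OK_mul /OK_add /OK_bit /= qt qn; congr pair; lia.
  + exists true, (a2 + k, - k).
    by rewrite /digit_cons /OK_mul /OK_add /OK_bit /= qt qn; congr pair; lia.
- move=> a; rewrite /OK_norm qt qn => Na.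
  have := sqr_ge0 (2 * a.1 + a.2); have := sqr_ge0 a.2; rewrite !expr2 => a2_sq u_sq.
  have a2_bd : -1 <= a.2 <= 1 by apply/andP; split; nia.
  apply: digits_val_box2; first by vm_compute.
  + by apply/andP; split; nia.
  + lia.
Qed.

Theorem proposition6p1 :
  (forall d : int, quad_disc_param d ->
     ((exists X : OK, S_generator d X) <-> [\/ d = -1, d = -2 | d = -7]))
  /\ S_generator (-1) (-1, 1)
  /\ S_generator (-2) (0, 1)
  /\ S_generator (-7) (0, 1).
Proof.
split; last by split; [exact: S_generator_m1 | split; [exact: S_generator_m2 | exact: S_generator_m7]].
move=> d [_ d_neq1 _]; split=> [[X SG]|].
- have [D_gt1|D_le1] := ltrP 1 (qdisc d); first by case: (S_generator_real D_gt1 SG).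
  apply: (OK_norm2_imaginary (x := X)); last exact: S_generator_norm SG.
  by move: D_le1 d_neq1; rewrite qdiscE; case: ifP => /eqP; lia.
- case=> ->; [exists (-1, 1); exact: S_generator_m1 | exists (0, 1); exact: S_generator_m2
             | exists (0, 1); exact: S_generator_m7].
Qed.
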